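(* Every minimal lower frame sequence in a separable Hilbert space $\mathcal{H}$ is a complete Riesz-Fischer sequence in $\mathcal{H}$.
   Context: For a sequence $\Psi=\{\psi_i\}_{i\in I}$ ($I$ countable): $\Psi$ is a lower frame sequence if there is $A>0$ with $A\|f\|^2\le\sum_i|\langle f,\psi_i\rangle|^2$ for all $f\in\mathcal{H}$ with $\{\langle f,\psi_i\rangle\}\in\ell^2$; minimal if $\psi_j\notin\overline{\mathrm{span}}\{\psi_i\}_{i\ne j}$ for all $j$; complete if $\overline{\mathrm{span}}\{\psi_i\}=\mathcal{H}$; a Riesz-Fischer sequence if there is $A'>0$ with $A'\|c\|^2\le\|\sum_ic_i\psi_i\|^2$ for all finitely supported scalar sequences $c$. *)

From Stdlib Require Import Reals List.
From Coquelicot Require Import Coquelicot.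
Open Scope R_scope.

(* An inner product on a complex normed module H, linear in the first
   argument, conjugate-symmetric, and inducing the norm of H:
   <x,x> = ||x||^2.  (Positivity/definiteness follow from the norm axioms.) *)
Record InnerProduct (H : NormedModule C_AbsRing) := {
  ip :> H -> H -> C;
  ip_addl : forall x y z, ip (plus x y) z = Cplus (ip x z) (ip y z);
  ip_scall : forall (a : C) x z, ip (scal a x) z = Cmult a (ip x z);
  ip_conj : forall x y, ip y x = Cconj (ip x y);
  ip_norm : forall x, ip x x = RtoC (norm x ^ 2)
}.

Record HilbertSpace := {
  hs_carrier :> CompleteNormedModule C_AbsRing;
  hs_ip : InnerProduct hs_carrier
}.

Definition inner (H : HilbertSpace) (x y : H) : C := hs_ip H x y.

Definition separable (H : HilbertSpace) : Prop :=
  exists d : nat -> H, forall (x : H) (eps : R), 0 < eps ->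
    exists n, norm (minus x (d n)) < eps.

Definition countable_type (I : Type) : Prop :=
  exists e : I -> nat, forall i j, e i = e j -> i = j.

Definition lsumR {I : Type} (l : list I) (a : I -> R) : R :=
  fold_right (fun i s => a i + s) 0 l.
Definition lsumH {I : Type} {H : HilbertSpace} (l : list I) (v : I -> H) : H :=
  fold_right (fun i s => plus (v i) s) zero l.

(* sum_{i in I} a_i for a_i >= 0, as the supremum (in Rbar) of all finite
   partial sums over finite subsets of I (lists without duplicates). *)
Definition sumI {I : Type} (a : I -> R) : Rbar :=
  Lub_Rbar (fun s => exists l : list I, NoDup l /\ s = lsumR l a).

Definition coeffs_in_l2 {I : Type} {H : HilbertSpace} (psi : I -> H) (f : H) : Prop :=
  is_finite (sumI (fun i => Cmod (inner H f (psi i)) ^ 2)).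

Definition lower_frame_sequence {I : Type} {H : HilbertSpace} (psi : I -> H) : Prop :=
  exists A : R, 0 < A /\ forall f : H, coeffs_in_l2 psi f ->
    Rbar_le (Finite (A * norm f ^ 2)) (sumI (fun i => Cmod (inner H f (psi i)) ^ 2)).

Definition in_span {I : Type} {H : HilbertSpace} (P : I -> Prop) (psi : I -> H) (v : H) : Prop :=
  exists (l : list I) (c : I -> C), List.Forall P l /\ v = lsumH l (fun i => scal (c i) (psi i)).

Definition in_closed_span {I : Type} {H : HilbertSpace} (P : I -> Prop) (psi : I -> H) (v : H) : Prop :=
  forall eps : R, 0 < eps -> exists w, in_span P psi w /\ norm (minus v w) < eps.

Definition minimal_seq {I : Type} {H : HilbertSpace} (psi : I -> H) : Prop :=
  forall j : I, ~ in_closed_span (fun i => i <> j) psi (psi j).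

Definition complete_seq {I : Type} {H : HilbertSpace} (psi : I -> H) : Prop :=
  forall f : H, in_closed_span (fun _ => True) psi f.

(* Riesz-Fischer: A' ||c||^2 <= ||sum c_i psi_i||^2 for finitely supported c
   (support contained in a finite duplicate-free list l). *)
Definition riesz_fischer {I : Type} {H : HilbertSpace} (psi : I -> H) : Prop :=
  exists A' : R, 0 < A' /\ forall (l : list I) (c : I -> C), NoDup l ->
    A' * lsumR l (fun i => Cmod (c i) ^ 2)
      <= norm (lsumH l (fun i => scal (c i) (psi i))) ^ 2.

(* Everything rests on the projection theorem: a minimizing sequence for the distance
   from v to a subspace S is Cauchy by the parallelogram law, and its limit m satisfies
   v - m ⊥ closure S.  Completeness: f minus its projection onto the closed span of the
   psi_i is orthogonal to every psi_i, so its frame coefficients vanish and the lower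
   frame bound forces it to be 0.  Minimality: projecting psi_j onto the closed span of
   the other psi_i leaves a nonzero residual, which, normalized, yields a biorthogonal
   family h_j.  Riesz-Fischer: for finitely supported c, f = Σ c_j h_j has frame
   coefficients exactly c, so A ‖f‖² <= ‖c‖², while Re <Σ c_i psi_i, f> = ‖c‖²; then
   0 <= ‖Σ c_i psi_i - A f‖² <= ‖Σ c_i psi_i‖² - A ‖c‖². *)

From Stdlib Require Import Reals List Lra Psatz Classical ClassicalEpsilon.
From Coquelicot Require Import Coquelicot.
Open Scope R_scope.

Lemma minus_eq_zero_inv {G : AbelianGroup} (x y : G) : minus x y = zero -> x = y.
Proof. intros E. apply (plus_reg_r (opp y)). rewrite plus_opp_r. exact E. Qed.

Lemma minus_plus_cancel {G : AbelianGroup} (x y : G) : plus (minus x y) y = x.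
Proof. unfold minus. rewrite <- plus_assoc, plus_opp_l. apply plus_zero_r. Qed.

Section NormedModule.
Context {K : AbsRing} {V : NormedModule K}.

Definition subspace (S : V -> Prop) : Prop :=
  S zero /\ (forall x y, S x -> S y -> S (plus x y)) /\ (forall (a : K) x, S x -> S (scal a x)).

(* [in_closed_span P psi] unfolds to [closure_of (in_span P psi)]. *)
Definition closure_of (S : V -> Prop) (x : V) : Prop :=
  forall eps, 0 < eps -> exists w, S w /\ norm (minus x w) < eps.

Lemma norm_minus_sym (x y : V) : norm (minus x y) = norm (minus y x).
Proof. rewrite <- opp_minus, norm_opp. reflexivity. Qed.

Lemma norm_minus_triangle (x y z : V) : norm (minus x z) <= norm (minus x y) + norm (minus y z).
Proof. rewrite (minus_trans y). apply norm_triangle. Qed.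

Lemma norm_minus_self (x : V) : norm (minus x x) = 0.
Proof. rewrite minus_eq_zero. apply norm_zero. Qed.

Lemma subset_closure (S : V -> Prop) x : S x -> closure_of S x.
Proof. intros Sx eps He. exists x. rewrite norm_minus_self. auto. Qed.

Lemma closure_dist_ge (S : V -> Prop) v z d :
  (forall w, S w -> d <= norm (minus v w)) -> closure_of S z -> d <= norm (minus v z).
Proof.
  intros Hd Cz. apply Rle_plus_epsilon. intros e He.
  destruct (Cz e He) as [w [Sw Nw]].
  pose proof (Hd w Sw). pose proof (norm_minus_triangle v z w). lra.
Qed.

Lemma closure_add_scal (S : V -> Prop) m u (t : K) :
  subspace S -> closure_of S m -> closure_of S u -> closure_of S (plus m (scal t u)).
Proof.
  intros [_ [Splus Sscal]] Cm Cu eps He.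
  pose proof (abs_ge_0 t) as Ht.
  destruct (Cm (eps / 2)) as [w1 [S1 N1]]; [lra|].
  destruct (Cu (eps / 2 / (abs t + 1))) as [w2 [S2 N2]].
  { apply Rdiv_lt_0_compat; lra. }
  exists (plus w1 (scal t w2)). split; [auto|].
  replace (minus (plus m (scal t u)) (plus w1 (scal t w2)))
    with (plus (minus m w1) (scal t (minus u w2))).
  2:{ unfold minus. rewrite @scal_distr_l, @scal_opp_r, @opp_plus, <- !@plus_assoc.
      f_equal. rewrite !plus_assoc. f_equal. apply plus_comm. }
  eapply Rle_lt_trans; [apply norm_triangle|].
  eapply Rle_lt_trans; [apply Rplus_le_compat_l, norm_scal|].
  assert (abs t * norm (minus u w2) <= abs t * (eps / 2 / (abs t + 1)))
    by (apply Rmult_le_compat_l; lra).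
  assert (abs t * (eps / 2 / (abs t + 1)) < eps / 2).
  { assert (E : eps / 2 / (abs t + 1) * (abs t + 1) = eps / 2) by (field; lra).
    assert (0 < eps / 2 / (abs t + 1)) by (apply Rdiv_lt_0_compat; lra). nra. }
  lra.
Qed.

End NormedModule.

Lemma cauchy_seq_has_limit {K : AbsRing} {V : CompleteNormedModule K} (u : nat -> V) :
  (forall eps, 0 < eps -> exists N, forall n k, (N <= n)%nat -> (N <= k)%nat ->
     norm (minus (u k) (u n)) < eps) ->
  exists m : V, forall eps, 0 < eps ->
    exists N, forall n, (N <= n)%nat -> norm (minus (u n) m) < eps.
Proof.
  intros Cu.
  destruct (proj1 (filterlim_locally_cauchy (F := eventually) u)) as [m Hm].
  { intros eps. destruct (Cu eps (cond_pos eps)) as [N HN].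
    exists (fun n => (N <= n)%nat). split; [now exists N|].
    intros n k Hn Hk. exact (norm_compat1 (V := V) _ _ _ (HN n k Hn Hk)). }
  exists m. intros eps He.
  exact (proj1 (filterlim_locally_ball_norm u m) Hm (mkposreal eps He)).
Qed.

Lemma inv_succ_lt (e : R) : 0 < e -> exists N, / (INR N + 1) < e.
Proof.
  intros He. destruct (INR_archimed e 1 He) as [N HN]. exists N.
  pose proof (pos_INR N).
  apply (Rmult_lt_reg_r (INR N + 1)); [lra|]. rewrite Rinv_l; nra.
Qed.

Lemma inv_succ_le (N n : nat) : (N <= n)%nat -> / (INR n + 1) <= / (INR N + 1).
Proof. intros Hn. apply le_INR in Hn. pose proof (pos_INR N). apply Rinv_le_contravar; lra. Qed.

Lemma exists_inf_nonneg {T : Type} (S : T -> Prop) (f : T -> R) (t0 : T) :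
  S t0 -> (forall t, 0 <= f t) ->
  exists d, 0 <= d /\ (forall t, S t -> d <= f t) /\
    forall e, 0 < e -> exists t, S t /\ f t < d + e.
Proof.
  intros St0 Hf.
  set (E := fun r => exists t, S t /\ r = - f t).
  assert (bE : bound E).
  { exists 0. intros r [t [_ ->]]. specialize (Hf t). lra. }
  destruct (completeness E bE (ex_intro _ (- f t0) (ex_intro _ t0 (conj St0 eq_refl))))
    as [m [m_ub m_lub]].
  exists (- m). split; [|split].
  - enough (m <= 0) by lra. apply m_lub. intros r [t [_ ->]]. specialize (Hf t). lra.
  - intros t St. enough (- f t <= m) by lra. apply m_ub. now exists t.
  - intros e He. apply not_all_not_ex. intros Hnone.
    enough (m <= m - e) by lra. apply m_lub. intros r [t [St ->]].
    specialize (Hnone t). apply not_and_or in Hnone. destruct Hnone; [contradiction|lra].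
Qed.

Section InnerProduct.
Context {H : HilbertSpace}.
Implicit Types x y z : H.

Lemma inner_plus_l x y z : inner H (plus x y) z = (inner H x z + inner H y z)%C.
Proof. apply ip_addl. Qed.
Lemma inner_scal_l (a : C) x z : inner H (scal a x) z = (a * inner H x z)%C.
Proof. apply ip_scall. Qed.
Lemma inner_conj x y : inner H y x = Cconj (inner H x y).
Proof. apply ip_conj. Qed.
Lemma inner_self x : inner H x x = RtoC (norm x ^ 2).
Proof. apply ip_norm. Qed.

Lemma inner_plus_r x y z : inner H z (plus x y) = (inner H z x + inner H z y)%C.
Proof. rewrite inner_conj, inner_plus_l, Cplus_conj, <- !inner_conj. reflexivity. Qed.
Lemma inner_scal_r (a : C) x z : inner H z (scal a x) = (Cconj a * inner H z x)%C.
Proof. rewrite inner_conj, inner_scal_l, Cmult_conj, <- inner_conj. reflexivity. Qed.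
Lemma inner_opp_l x z : inner H (opp x) z = (- inner H x z)%C.
Proof.
  rewrite <- (scal_opp_one x : scal (opp one) x = opp x), inner_scal_l.
  apply injective_projections; simpl; ring.
Qed.
Lemma inner_minus_l x y z : inner H (minus x y) z = (inner H x z - inner H y z)%C.
Proof. unfold minus. rewrite inner_plus_l, inner_opp_l. ring. Qed.
Lemma inner_minus_r x y z : inner H z (minus x y) = (inner H z x - inner H z y)%C.
Proof. rewrite inner_conj, inner_minus_l, Cminus_conj, <- !inner_conj. reflexivity. Qed.
Lemma inner_zero_l z : inner H zero z = 0%C.
Proof.
  assert (E := inner_plus_l zero zero z). rewrite plus_zero_l in E.
  transitivity (inner H zero z + inner H zero z - inner H zero z)%C; [|rewrite <- E]; ring.
Qed.
Lemma inner_zero_r z : inner H z zero = 0%C.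
Proof. rewrite inner_conj, inner_zero_l. apply injective_projections; simpl; ring. Qed.

Lemma norm_sqr_re x : norm x ^ 2 = Re (inner H x x).
Proof. rewrite inner_self. reflexivity. Qed.

Lemma norm_minus_scal_sqr x y (t : C) :
  norm (minus x (scal t y)) ^ 2 =
  norm x ^ 2 - 2 * Re (Cconj t * inner H x y) + Cmod t ^ 2 * norm y ^ 2.
Proof.
  rewrite !norm_sqr_re, inner_minus_l, !inner_minus_r, !inner_scal_l, !inner_scal_r,
    (inner_conj x y), Cmod2_alt, (inner_self y).
  destruct t as [t1 t2], (inner H x y) as [a b]. unfold Re; simpl. ring.
Qed.

End InnerProduct.

Section Projection.
Context {H : HilbertSpace}.

Lemma apollonius (v w w' : H) :
  norm (minus w w') ^ 2 = 2 * norm (minus v w) ^ 2 + 2 * norm (minus v w') ^ 2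
    - 4 * norm (minus v (scal (RtoC (/ 2)) (plus w w'))) ^ 2.
Proof.
  rewrite !norm_sqr_re.
  repeat rewrite ?inner_minus_l, ?inner_minus_r, ?inner_plus_l, ?inner_plus_r,
    ?inner_scal_l, ?inner_scal_r.
  rewrite (inner_conj v w), (inner_conj v w'), (inner_conj w w').
  destruct (inner H v w), (inner H v w'), (inner H w w'), (inner H v v), (inner H w w),
    (inner H w' w'). unfold Re; simpl. field.
Qed.

Lemma minimizer_orthogonal (x u : H) :
  (forall t : C, norm x <= norm (minus x (scal t u))) -> inner H x u = 0%C.
Proof.
  intros Hmin.
  set (N := norm u ^ 2). set (s := / (N + 1)).
  assert (N0 : 0 <= N) by (unfold N; pose proof (norm_ge_0 u); nra).
  assert (s0 : 0 < s) by (apply Rinv_0_lt_compat; lra).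
  assert (sN : s * N < 1).
  { unfold s. apply (Rmult_lt_reg_l (N + 1)); [lra|].
    rewrite <- Rmult_assoc, Rinv_r by lra. lra. }
  (* with t = s <x,u>: |<x,u>|^2 s (s N - 2) >= 0 forces <x,u> = 0 *)
  assert (Hsq : norm x ^ 2 <= norm (minus x (scal (RtoC s * inner H x u)%C u)) ^ 2).
  { apply pow_incr. split; [apply norm_ge_0|apply Hmin]. }
  rewrite norm_minus_scal_sqr, Cmod2_alt in Hsq. fold N in Hsq.
  destruct (inner H x u) as [a b]. simpl in Hsq.
  assert (0 <= (a * a + b * b) * (s * N - 2)) by nra.
  assert (a = 0) by nra. assert (b = 0) by nra. subst.
  reflexivity.
Qed.

Lemma minimizing_pair_bound (S : H -> Prop) (v w w' : H) (d delta : R) :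
  subspace S -> 0 <= d -> (forall z, S z -> d <= norm (minus v z)) ->
  S w -> S w' -> norm (minus v w) < d + delta -> norm (minus v w') < d + delta ->
  norm (minus w w') ^ 2 <= (8 * d + 4 * delta) * delta.
Proof.
  intros [_ [Splus Sscal]] d0 Hd Sw Sw' Hw Hw'.
  set (mid := scal (RtoC (/ 2)) (plus w w')).
  assert (Hmid : d <= norm (minus v mid)) by (apply Hd, Sscal, Splus; auto).
  pose proof (apollonius v w w') as E. fold mid in E.
  pose proof (norm_ge_0 (minus v w)). pose proof (norm_ge_0 (minus v w')).
  assert (norm (minus v w) ^ 2 <= (d + delta) ^ 2) by (apply pow_incr; lra).
  assert (norm (minus v w') ^ 2 <= (d + delta) ^ 2) by (apply pow_incr; lra).
  assert (d ^ 2 <= norm (minus v mid) ^ 2) by (apply pow_incr; lra).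
  nra.
Qed.

Lemma minimizing_seq_cauchy (S : H -> Prop) (v : H) (d : R) (w : nat -> H) :
  subspace S -> 0 <= d -> (forall z, S z -> d <= norm (minus v z)) ->
  (forall n, S (w n) /\ norm (minus v (w n)) < d + / (INR n + 1)) ->
  forall eps, 0 < eps -> exists N, forall n k, (N <= n)%nat -> (N <= k)%nat ->
    norm (minus (w k) (w n)) < eps.
Proof.
  intros SS d0 d_low Hw eps He.
  destruct (inv_succ_lt (Rmin 1 (eps ^ 2 / (8 * d + 4)))) as [N HN].
  { apply Rmin_glb_lt; [lra|]. apply Rdiv_lt_0_compat; [nra|lra]. }
  pose proof (Rmin_l 1 (eps ^ 2 / (8 * d + 4))). pose proof (Rmin_r 1 (eps ^ 2 / (8 * d + 4))).
  set (delta := / (INR N + 1)) in *.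
  assert (0 < delta) by (apply Rinv_0_lt_compat; pose proof (pos_INR N); lra).
  exists N. intros n k Hn Hk.
  destruct (Hw n) as [Sn Bn]. destruct (Hw k) as [Sk Bk].
  pose proof (inv_succ_le N n Hn) as Ln. pose proof (inv_succ_le N k Hk) as Lk.
  fold delta in Ln, Lk.
  assert (B : norm (minus (w k) (w n)) ^ 2 <= (8 * d + 4 * delta) * delta).
  { apply (minimizing_pair_bound S v); auto; lra. }
  assert ((8 * d + 4) * delta < eps ^ 2).
  { assert (E : (8 * d + 4) * (eps ^ 2 / (8 * d + 4)) = eps ^ 2) by (field; lra). nra. }
  pose proof (norm_ge_0 (minus (w k) (w n))). nra.
Qed.

Lemma best_approximation (S : H -> Prop) (v : H) :
  subspace S -> exists m, closure_of S m /\
    forall z, closure_of S z -> norm (minus v m) <= norm (minus v z).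
Proof.
  intros SS. pose proof SS as [S0 _].
  destruct (exists_inf_nonneg S (fun w => norm (minus v w)) zero S0 (fun w => norm_ge_0 _))
    as [d [d0 [d_low d_approx]]].
  assert (Hw : forall n : nat, exists w, S w /\ norm (minus v w) < d + / (INR n + 1)).
  { intro n. apply d_approx, Rinv_0_lt_compat. pose proof (pos_INR n). lra. }
  destruct (choice _ Hw) as [w Hw'].
  destruct (cauchy_seq_has_limit w (minimizing_seq_cauchy S v d w SS d0 d_low Hw'))
    as [m Hm].
  exists m. split.
  - intros eps He. destruct (Hm eps He) as [N HN]. exists (w N). split.
    + apply Hw'.
    + rewrite norm_minus_sym. apply HN. lia.
  - intros z Cz. apply Rle_trans with d; [|exact (closure_dist_ge S v z d d_low Cz)].
    apply Rle_plus_epsilon. intros e He.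
    destruct (Hm (e / 2)) as [N1 HN1]; [lra|].
    destruct (inv_succ_lt (e / 2)) as [N2 HN2]; [lra|].
    set (n := Nat.max N1 N2).
    pose proof (HN1 n (Nat.le_max_l _ _)). pose proof (inv_succ_le N2 n (Nat.le_max_r _ _)).
    pose proof (proj2 (Hw' n)).
    assert (norm (minus v m) <= norm (minus v (w n)) + norm (minus (w n) m))
      by exact (norm_minus_triangle v (w n) m).
    lra.
Qed.

Lemma orthogonal_projection (S : H -> Prop) (v : H) :
  subspace S -> exists m, closure_of S m /\
    forall u, closure_of S u -> inner H (minus v m) u = 0%C.
Proof.
  intros SS. destruct (best_approximation S v SS) as [m [Cm Hm]].
  exists m. split; [exact Cm|]. intros u Cu. apply minimizer_orthogonal. intros t.
  apply Rle_trans with (norm (minus v (plus m (scal t u)))).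
  - apply Hm. exact (closure_add_scal S m u t SS Cm Cu).
  - right. f_equal. unfold minus. rewrite @opp_plus, @plus_assoc. reflexivity.
Qed.

End Projection.

Section Span.
Context {I : Type} {H : HilbertSpace} (P : I -> Prop) (psi : I -> H).

Lemma lsumH_ext (l : list I) (f g : I -> H) :
  (forall j, In j l -> f j = g j) -> lsumH l f = lsumH l g.
Proof.
  induction l as [|j l IH]; simpl; intros E; auto.
  rewrite E by auto. f_equal. apply IH. auto.
Qed.

Lemma scal_lsumH (a : C) (l : list I) (f : I -> H) :
  scal a (lsumH l f) = lsumH l (fun i => scal a (f i)).
Proof.
  induction l as [|j l IH]; simpl.
  - exact (scal_zero_r a).
  - rewrite @scal_distr_l, IH. reflexivity.
Qed.

Definition update (c : I -> C) (i : I) (a : C) : I -> C :=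
  fun j => if excluded_middle_informative (j = i) then a else c j.

Lemma lsumH_update_notin (l : list I) (c : I -> C) (i : I) (a : C) : ~ In i l ->
  lsumH l (fun j => scal (update c i a j) (psi j)) = lsumH l (fun j => scal (c j) (psi j)).
Proof.
  intros Hi. apply lsumH_ext. intros j Hj. unfold update.
  destruct (excluded_middle_informative (j = i)) as [->|]; [contradiction|reflexivity].
Qed.

Lemma lsumH_update_in (l : list I) (c : I -> C) (i : I) (a : C) : NoDup l -> In i l ->
  lsumH l (fun j => scal (update c i (a + c i)%C j) (psi j)) =
  plus (scal a (psi i)) (lsumH l (fun j => scal (c j) (psi j))).
Proof.
  induction l as [|j l IH]; intros ND Hi; [destruct Hi|].
  inversion ND as [|? ? Hj ND']; subst. simpl.
  unfold update at 1. destruct (excluded_middle_informative (j = i)) as [->|Hne].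
  - rewrite lsumH_update_notin by auto. rewrite @scal_distr_r, plus_assoc. reflexivity.
  - destruct Hi as [->|Hi]; [congruence|].
    rewrite IH by auto. rewrite !plus_assoc, (plus_comm (scal (c j) (psi j))). reflexivity.
Qed.

Definition in_span_nodup (v : H) : Prop :=
  exists l c, NoDup l /\ List.Forall P l /\ v = lsumH l (fun i => scal (c i) (psi i)).

Lemma in_span_nodup_add_term (a : C) (i : I) (v : H) :
  P i -> in_span_nodup v -> in_span_nodup (plus (scal a (psi i)) v).
Proof.
  intros Pi [l [c [ND [Pl ->]]]].
  destruct (classic (In i l)) as [Hi|Hi].
  - exists l, (update c i (a + c i)%C). repeat split; auto.
    symmetry. now apply lsumH_update_in.
  - exists (i :: l), (update c i a). repeat split; try constructor; auto.
    simpl. rewrite lsumH_update_notin by auto. unfold update at 1.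
    destruct (excluded_middle_informative (i = i)); [reflexivity|congruence].
Qed.

Lemma in_span_nodup_add (l : list I) (c : I -> C) (v : H) : List.Forall P l ->
  in_span_nodup v -> in_span_nodup (plus (lsumH l (fun i => scal (c i) (psi i))) v).
Proof.
  induction l as [|i l IH]; simpl; intros Pl Hv.
  - now rewrite plus_zero_l.
  - inversion Pl. rewrite <- plus_assoc. apply in_span_nodup_add_term; auto.
Qed.

Lemma in_span_subspace : subspace (in_span P psi).
Proof.
  split; [|split].
  - exists nil, (fun _ => RtoC 0). auto.
  - intros x y [l [c [Pl ->]]] Hy.
    assert (Hy' : in_span_nodup y).
    { destruct Hy as [l' [c' [Pl' ->]]]. rewrite <- (plus_zero_r (lsumH l' _)).
      apply in_span_nodup_add; auto. exists nil, (fun _ => RtoC 0). repeat constructor. }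
    destruct (in_span_nodup_add l c y Pl Hy') as [l'' [c'' [_ Hsum]]].
    now exists l'', c''.
  - intros a x [l [c [Pl ->]]]. exists l, (fun i => a * c i)%C. split; auto.
    rewrite scal_lsumH. apply lsumH_ext. intros j _. exact (scal_assoc a (c j) (psi j)).
Qed.

Lemma in_span_psi (i : I) : P i -> in_span P psi (psi i).
Proof.
  intros Pi. exists (i :: nil), (fun _ => RtoC 1). split; [now constructor|].
  simpl. rewrite plus_zero_r. symmetry. exact (scal_one (psi i)).
Qed.

End Span.

Section FiniteSums.
Context {I : Type}.

Lemma lsumR_nonneg (l : list I) (a : I -> R) : (forall i, 0 <= a i) -> 0 <= lsumR l a.
Proof. intros Ha. induction l as [|i l IH]; simpl; [lra|]. pose proof (Ha i). lra. Qed.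

Lemma lsumR_app (l1 l2 : list I) (a : I -> R) :
  lsumR (l1 ++ l2) a = lsumR l1 a + lsumR l2 a.
Proof. induction l1 as [|i l1 IH]; simpl; [lra|]. rewrite IH. lra. Qed.

Lemma lsumR_ext (l : list I) (a b : I -> R) :
  (forall i, In i l -> a i = b i) -> lsumR l a = lsumR l b.
Proof.
  induction l as [|i l IH]; simpl; intros E; auto.
  rewrite E by auto. f_equal. apply IH. auto.
Qed.

Lemma lsumR_le_of_support (a : I -> R) (l' l : list I) :
  (forall i, 0 <= a i) -> NoDup l' -> NoDup l ->
  (forall i, In i l' -> a i <> 0 -> In i l) -> lsumR l' a <= lsumR l a.
Proof.
  intros Ha ND'. revert l. induction ND' as [|x l' Hx ND' IH]; intros l ND Hsupp; simpl.
  - now apply lsumR_nonneg.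
  - destruct (Req_dec (a x) 0) as [E|E].
    + rewrite E, Rplus_0_l. apply IH; auto. intros y Hy. apply Hsupp. simpl; auto.
    + destruct (in_split x l (Hsupp x (or_introl eq_refl) E)) as [l1 [l2 ->]].
      rewrite lsumR_app. simpl.
      assert (lsumR l' a <= lsumR (l1 ++ l2) a).
      { apply IH; [eapply NoDup_remove_1; eauto|].
        intros y Hy Hay. assert (Hyl : In y (l1 ++ x :: l2)) by (apply Hsupp; simpl; auto).
        apply in_app_or in Hyl. apply in_or_app. destruct Hyl as [?|[->|?]]; auto.
        contradiction. }
      rewrite lsumR_app in *. lra.
Qed.

Lemma sumI_finite_le (a : I -> R) (B : R) :
  (forall i, 0 <= a i) -> (forall l, NoDup l -> lsumR l a <= B) ->
  is_finite (sumI a) /\ Rbar_le (sumI a) B.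
Proof.
  intros Ha Hb. unfold sumI.
  destruct (Lub_Rbar_correct (fun s => exists l : list I, NoDup l /\ s = lsumR l a))
    as [ub lub].
  assert (Hle : Rbar_le (Lub_Rbar (fun s => exists l, NoDup l /\ s = lsumR l a)) B).
  { apply lub. intros x [l [ND ->]]. now apply Hb. }
  assert (Hge : Rbar_le 0 (Lub_Rbar (fun s => exists l, NoDup l /\ s = lsumR l a))).
  { apply ub. exists nil. split; [constructor|reflexivity]. }
  destruct (Lub_Rbar _); simpl in *; try contradiction. split; [reflexivity|exact Hle].
Qed.

Definition lsumC (l : list I) (F : I -> C) : C :=
  fold_right (fun i s => (F i + s)%C) (RtoC 0) l.

Lemma lsumC_zero (l : list I) (F : I -> C) :
  (forall i, In i l -> F i = RtoC 0) -> lsumC l F = RtoC 0.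
Proof.
  induction l as [|i l IH]; simpl; intros E; auto.
  rewrite E, IH by auto. ring.
Qed.

Lemma lsumC_single (l : list I) (F : I -> C) (i : I) :
  NoDup l -> In i l -> (forall j, In j l -> j <> i -> F j = RtoC 0) -> lsumC l F = F i.
Proof.
  induction 1 as [|k l Hk ND IH]; intros Hi E; [destruct Hi|]. simpl.
  destruct Hi as [->|Hi].
  - rewrite lsumC_zero; [ring|]. intros j Hj. apply E; [now right|]. intros ->. contradiction.
  - rewrite IH, (E k); auto.
    + ring.
    + now left.
    + intros ->. contradiction.
    + intros j Hj. apply E. now right.
Qed.

Lemma Re_lsumC (l : list I) (F : I -> C) : Re (lsumC l F) = lsumR l (fun j => Re (F j)).
Proof. induction l as [|i l IH]; simpl; auto. rewrite <- IH. reflexivity. Qed.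

Lemma inner_lsumH_l {H : HilbertSpace} (l : list I) (v : I -> H) (y : H) :
  inner H (lsumH l v) y = lsumC l (fun j => inner H (v j) y).
Proof. induction l; simpl; [apply inner_zero_l|]. rewrite inner_plus_l, IHl. reflexivity. Qed.

Lemma inner_lsumH_r {H : HilbertSpace} (l : list I) (v : I -> H) (y : H) :
  inner H y (lsumH l v) = lsumC l (fun j => inner H y (v j)).
Proof. induction l; simpl; [apply inner_zero_r|]. rewrite inner_plus_r, IHl. reflexivity. Qed.

End FiniteSums.

Section FrameSequences.
Context {I : Type} {H : HilbertSpace} (psi : I -> H).

Lemma lower_frame_orthogonal_zero (g : H) :
  lower_frame_sequence psi -> (forall i, inner H g (psi i) = RtoC 0) -> g = zero.
Proof.
  intros [A [A0 HA]] Hg.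
  assert (Hz : forall i, Cmod (inner H g (psi i)) ^ 2 = 0) by (intro i; rewrite Hg, Cmod_0; ring).
  destruct (sumI_finite_le (fun i => Cmod (inner H g (psi i)) ^ 2) 0) as [Hfin Hle].
  - intro i. rewrite Hz. lra.
  - intros l _. induction l as [|i l IH]; unfold lsumR in *; simpl in *; [lra|]. rewrite Hz. lra.
  - pose proof (Rbar_le_trans _ _ _ (HA g Hfin) Hle) as Hg0. simpl in Hg0.
    assert (N2 : norm g ^ 2 <= 0) by (apply (Rmult_le_reg_l A); [|simpl]; lra).
    assert (N0 : norm g = 0) by (pose proof (norm_ge_0 g); nra).
    exact (norm_eq_zero g N0).
Qed.

Lemma lower_frame_complete : lower_frame_sequence psi -> complete_seq psi.
Proof.
  intros LF f.
  destruct (orthogonal_projection (in_span (fun _ => True) psi) f (in_span_subspace _ psi))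
    as [m [Cm Orth]].
  replace f with m; [exact Cm|]. symmetry. apply minus_eq_zero_inv.
  apply lower_frame_orthogonal_zero; auto.
  intros i. apply Orth. exact (subset_closure _ _ (in_span_psi _ psi i Logic.I)).
Qed.

Definition biorthogonal (h : I -> H) : Prop :=
  (forall j, inner H (h j) (psi j) = RtoC 1) /\
  (forall i j, i <> j -> inner H (h j) (psi i) = RtoC 0).

Lemma biorthogonal_vector (j : I) : ~ in_closed_span (fun i => i <> j) psi (psi j) ->
  exists h : H, inner H h (psi j) = RtoC 1 /\ forall i, i <> j -> inner H h (psi i) = RtoC 0.
Proof.
  intros Hmin.
  destruct (orthogonal_projection (in_span (fun i => i <> j) psi) (psi j)
              (in_span_subspace _ psi)) as [m [Cm Orth]].
  set (g := minus (psi j) m : H) in Orth.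
  assert (g_nz : norm g <> 0).
  { intros N0. apply Hmin. replace (psi j) with m; [exact Cm|].
    symmetry. apply minus_eq_zero_inv, norm_eq_zero, N0. }
  assert (g_psi : inner H g (psi j) = RtoC (norm g ^ 2)).
  { replace (psi j) with (plus g m) by exact (minus_plus_cancel (psi j) m).
    rewrite inner_plus_r, (Orth m Cm), inner_self. ring. }
  assert (0 < norm g ^ 2) by (pose proof (norm_ge_0 g); apply pow_lt; lra).
  exists (scal (RtoC (/ norm g ^ 2)) g). split.
  - rewrite inner_scal_l, g_psi. apply injective_projections; simpl; field; lra.
  - intros i Hi. rewrite inner_scal_l, Orth; [ring|].
    exact (subset_closure _ _ (in_span_psi _ psi i Hi)).
Qed.

Lemma minimal_biorthogonal : minimal_seq psi -> exists h, biorthogonal h.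
Proof.
  intros Hmin. destruct (choice _ (fun j => biorthogonal_vector j (Hmin j))) as [h Hh].
  exists h. split; intros; now apply Hh.
Qed.

Section Synthesis.
Variables (h : I -> H) (l : list I) (c : I -> C).
Hypotheses (Hbi : biorthogonal h) (ND : NoDup l).

Let f := lsumH l (fun j => scal (c j) (h j)).
Let g := lsumH l (fun j => scal (c j) (psi j)).

Lemma synthesis_coeff (i : I) :
  inner H f (psi i) = if excluded_middle_informative (In i l) then c i else RtoC 0.
Proof.
  destruct Hbi as [B1 B0]. unfold f. rewrite inner_lsumH_l.
  destruct (excluded_middle_informative (In i l)) as [Hi|Hi].
  - rewrite (lsumC_single _ _ i ND Hi).
    + rewrite inner_scal_l, B1. ring.
    + intros j _ Hji. rewrite inner_scal_l, B0 by congruence. ring.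
  - apply lsumC_zero. intros j Hj. rewrite inner_scal_l, B0 by congruence. ring.
Qed.

Lemma synthesis_coeffs_sum :
  is_finite (sumI (fun i => Cmod (inner H f (psi i)) ^ 2)) /\
  Rbar_le (sumI (fun i => Cmod (inner H f (psi i)) ^ 2)) (lsumR l (fun i => Cmod (c i) ^ 2)).
Proof.
  assert (nonneg : forall i, 0 <= Cmod (inner H f (psi i)) ^ 2)
    by (intro i; apply pow2_ge_0).
  apply sumI_finite_le; auto. intros l' ND'.
  rewrite <- (lsumR_ext l (fun i => Cmod (inner H f (psi i)) ^ 2)).
  - apply lsumR_le_of_support; auto. intros i _ Hi.
    rewrite synthesis_coeff in Hi.
    destruct (excluded_middle_informative (In i l)); auto.
    exfalso. apply Hi. rewrite Cmod_0. ring.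
  - intros i Hi. rewrite synthesis_coeff.
    destruct (excluded_middle_informative (In i l)); [reflexivity|contradiction].
Qed.

Lemma synthesis_pairing : Re (inner H g f) = lsumR l (fun i => Cmod (c i) ^ 2).
Proof.
  destruct Hbi as [B1 B0].
  rewrite inner_conj, re_conj. unfold f. rewrite inner_lsumH_l, Re_lsumC.
  apply lsumR_ext. intros j Hj. rewrite inner_scal_l. unfold g. rewrite inner_lsumH_r.
  rewrite (lsumC_single _ _ j ND Hj).
  - rewrite inner_scal_r, B1, Cmod2_alt. destruct (c j). simpl. ring.
  - intros k _ Hkj. rewrite inner_scal_r, B0 by congruence. ring.
Qed.

End Synthesis.

Lemma lower_frame_biorthogonal_riesz_fischer (h : I -> H) :
  lower_frame_sequence psi -> biorthogonal h -> riesz_fischer psi.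
Proof.
  intros [A [A0 HA]] Hbi. exists A. split; [exact A0|]. intros l c ND.
  destruct (synthesis_coeffs_sum h l c Hbi ND) as [Hfin Hle].
  pose proof (synthesis_pairing h l c Hbi ND) as pairing.
  set (f := lsumH l (fun j => scal (c j) (h j))) in *.
  set (g := lsumH l (fun j => scal (c j) (psi j))) in *.
  set (S := lsumR l (fun i => Cmod (c i) ^ 2)) in *.
  assert (frame : A * norm f ^ 2 <= S) by exact (Rbar_le_trans _ _ _ (HA f Hfin) Hle).
  pose proof (norm_minus_scal_sqr g f (RtoC A)) as expand.
  rewrite Cmod_R, Rabs_pos_eq in expand by lra.
  replace (Re (Cconj (RtoC A) * inner H g f)) with (A * S) in expand
    by (rewrite <- pairing; destruct (inner H g f); unfold Re; simpl; ring).
  pose proof (pow2_ge_0 (norm (minus g (scal (RtoC A) f)))).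
  nra.
Qed.

End FrameSequences.

Theorem corollary6p19 (H : HilbertSpace) (I : Type) (psi : I -> H) :
  separable H -> countable_type I ->
  lower_frame_sequence psi -> minimal_seq psi ->
  complete_seq psi /\ riesz_fischer psi.
Proof.
  intros _ _ LF Min. split.
  - now apply lower_frame_complete.
  - destruct (minimal_biorthogonal psi Min) as [h Hh].
    exact (lower_frame_biorthogonal_riesz_fischer psi h LF Hh).
Qed.
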